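(* For every integer $m\geq 3$, the graph $C_m[4]$ has a $C_m$-factorization, i.e. its edge set can be partitioned into $C_m$-factors.
   Context: For a graph $G$ and a positive integer $k$, $G[k]$ is the graph with vertex set $V(G)\times\{0,1,\dots,k-1\}$ in which $(u,i)$ and $(w,j)$ are adjacent if and only if $uw\in E(G)$. $C_m$ is the cycle of length $m$. A $C_k$-factor of a graph is a spanning subgraph each of whose components is a cycle of length $k$; a $C_k$-factorization is a partition of the edge set into $C_k$-factors. *)

From mathcomp Require Import all_boot.
Set Implicit Arguments. Unset Strict Implicit. Unset Printing Implicit Defensive.

(* A (simple) graph on a finite vertex type T is given by its adjacency
   relation; edges are unordered pairs {x,y} with adj x y (symmetric). *)

Definition cycle_adj (m : nat) : rel 'I_m :=
  fun i j => (val j == (val i).+1 %% m) || (val i == (val j).+1 %% m).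

Definition lexk (T : finType) (G : rel T) (k : nat) : rel (T * 'I_k) :=
  fun x y => G x.1 y.1.

(* c : seq T with uniq c and size c = k describes the k-cycle
   c_0 c_1 ... c_{k-1} c_0; its edges at x are x -- next c x, x -- prev c x. *)
Definition cyc_edge (T : eqType) (c : seq T) (x y : T) : bool :=
  (y == next c x) || (y == prev c x).

(* F (a spanning subgraph of G, given by its edge relation) is a C_k-factor
   of G: every edge of F is an edge of G, and every vertex v lies in a
   component of F which is a cycle of length k, i.e. there is a k-cycle c
   through v such that for every vertex x of c, the F-neighbours of x are
   exactly its two cycle-neighbours (so c is closed in F and the edges of F
   on c are exactly the cycle edges). *)
Definition is_Ck_factor (T : finType) (G : rel T) (k : nat) (F : rel T) : Prop :=
  (forall x y, F x y -> G x y) /\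
  (forall v : T, exists c : seq T,
     [/\ uniq c, size c = k, v \in c &
         forall x, x \in c -> forall y, F x y = cyc_edge c x y]).

Definition has_Ck_factorization (T : finType) (G : rel T) (k : nat) : Prop :=
  exists Fs : seq (rel T),
    (forall i, i < size Fs -> is_Ck_factor G k (nth (fun _ _ => false) Fs i)) /\
    (forall x y, G x y -> count (fun F : rel T => F x y) Fs = 1).

(* Give the four copies of each vertex of C_m the structure of the additive group
   K of GF(4).  For k in K, join (u, a) to (u + 1, a + d_u(k)), where every
   k |-> d_u(k) is a bijection of K and sum_u d_u(k) = 0.  Bijectivity makes the
   four resulting subgraphs partition the edges between consecutive layers, and
   the zero sum makes the walk from any vertex close up after exactly one turn
   around C_m, so every component is an m-cycle.  For even m take d_u = id
   (K has exponent 2); for odd m use multiplication by w and w^2 at the last two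
   positions instead, since 1 + w + w^2 = 0. *)

From HB Require Import structures.
From mathcomp Require Import all_boot ssralg finalg zmodp zify.
Set Implicit Arguments. Unset Strict Implicit. Unset Printing Implicit Defensive.

Import GRing.Theory.

Definition blowup (T : finType) (G : rel T) (V : finType) : rel (T * V) :=
  fun x y => G x.1 y.1.
Arguments blowup {T} G V.

Section Pullback.

Variables (T T' : finType) (G : rel T) (G' : rel T') (phi : T -> T').
Hypothesis phi_bij : bijective phi.
Hypothesis G'_phi : forall x y, G' (phi x) (phi y) = G x y.

Definition pullback (F : rel T') : rel T := fun x y => F (phi x) (phi y).

Lemma is_Ck_factor_pullback k F :
  is_Ck_factor G' k F -> is_Ck_factor G k (pullback F).
Proof.
case: phi_bij => psi phiK psiK [FG' F_cycles].
split=> [x y | v]; first by rewrite -G'_phi; apply: FG'.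
have [c [c_uniq c_size c_v c_edges]] := F_cycles (phi v).
have psi_inj := can_inj psiK.
exists (map psi c); split.
- by rewrite map_inj_uniq.
- by rewrite size_map.
- by rewrite -[v]phiK map_f.
move=> _ /mapP[x c_x ->] y.
rewrite /pullback psiK c_edges // /cyc_edge.
by rewrite (next_map psi_inj) // (prev_map psi_inj) // -!(can2_eq phiK psiK).
Qed.

Lemma has_Ck_factorization_pullback k :
  has_Ck_factorization G' k -> has_Ck_factorization G k.
Proof.
case=> Fs [Fs_factors Fs_partition].
exists (map pullback Fs); split=> [i | x y Gxy].
  rewrite size_map => lt_i_Fs; rewrite (nth_map (fun _ _ => false)) //.
  exact/is_Ck_factor_pullback/Fs_factors.
by rewrite count_map; apply: Fs_partition; rewrite G'_phi.
Qed.

End Pullback.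

Lemma has_Ck_factorization_blowup_bij (T V W : finType) (G : rel T) (e : V -> W) k :
  bijective e -> has_Ck_factorization (blowup G W) k ->
  has_Ck_factorization (blowup G V) k.
Proof.
case=> e' eK e'K.
apply: (has_Ck_factorization_pullback (phi := fun x => (x.1, e x.2))) => //.
by exists (fun x => (x.1, e' x.2)) => -[x y] /=; rewrite ?eK ?e'K.
Qed.

Lemma cycle_adjE m (u w : 'I_m) : cycle_adj u w = (w == ordS u) || (u == ordS w).
Proof. by []. Qed.

Lemma ordS_ordS_neq m (u : 'I_m) : (2 < m)%N -> u != ordS (ordS u).
Proof.
move=> m_gt2; rewrite -val_eqE /=; have lt_u_m := ltn_ord u.
have [lt_u1_m | ge_u1_m] := ltnP u.+1 m; last first.
  have -> : u.+1 = m by lia.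
  by rewrite modnn modn_small; lia.
rewrite (modn_small lt_u1_m).
have [lt_u2_m | ge_u2_m] := ltnP u.+2 m; first by rewrite modn_small; lia.
have -> : u.+2 = m by lia.
by rewrite modnn; lia.
Qed.

Lemma next_enum_ord m (i : 'I_m) : next (enum 'I_m) i = ordS i.
Proof.
have i_e : i \in enum 'I_m by rewrite mem_enum.
apply: val_inj; rewrite /= next_nth i_e; case def_e: (enum 'I_m) i_e => [|i0 e] // _.
have -> : nth i0 e (index i (i0 :: e)) = nth i0 (enum 'I_m) (index i (enum 'I_m)).+1.
  by rewrite def_e.
rewrite index_enum_ord.
have [lt_i1_m | ge_i1_m] := ltnP i.+1 m; first by rewrite nth_enum_ord ?modn_small.
have -> : i.+1 = m by apply/eqP; rewrite eqn_leq ge_i1_m ltn_ord.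
rewrite modnn nth_default ?size_enum_ord //.
by have := nth_enum_ord i0 (leq_ltn_trans (leq0n i) (ltn_ord i)); rewrite def_e.
Qed.

Lemma prev_enum_ord m (i : 'I_m) : prev (enum 'I_m) i = ord_pred i.
Proof. by rewrite -{1}(ord_predK i) -next_enum_ord prev_next // enum_uniq. Qed.

Lemma count_eq_bij (T T' : finType) (f : T -> T') z :
  bijective f -> count (fun x => f x == z) (enum T) = 1%N.
Proof.
case=> g fK gK; rewrite (eq_count (fun x => can2_eq fK gK x z)).
by rewrite count_uniq_mem ?enum_uniq ?mem_enum.
Qed.

Section VoltageFactorization.

Local Open Scope ring_scope.

Variables (V : finZmodType) (m : nat) (d : 'I_m -> V -> V).
Hypothesis d_bij : forall u, bijective (d u).
Hypothesis d_sum0 : forall k, \sum_(u < m) d u k = 0.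

Definition voltage_factor (k : V) : rel ('I_m * V) := fun x y =>
  (y.1 == ordS x.1) && (y.2 == x.2 + d x.1 k)
  || (x.1 == ordS y.1) && (x.2 == y.2 + d y.1 k).

Definition partial_voltage (k : V) (i : 'I_m) : V := \sum_(j < m | (j < i)%N) d j k.

Lemma partial_voltage_ordS k i :
  partial_voltage k (ordS i) = partial_voltage k i + d i k.
Proof.
have partial_voltageS :
    \sum_(j < m | (j < i.+1)%N) d j k = partial_voltage k i + d i k.
  rewrite (bigD1 i) //= addrC /partial_voltage; congr (_ + _); apply: eq_bigl => j.
  by rewrite ltnS andbC -val_eqE -ltn_neqAle.
rewrite -partial_voltageS /partial_voltage /=.
have [lt_i1_m | ge_i1_m] := ltnP i.+1 m; first by rewrite modn_small.
have def_m : i.+1 = m by apply/eqP; rewrite eqn_leq ge_i1_m ltn_ord.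
rewrite def_m modnn big_pred0 // -[LHS](d_sum0 k).
by apply: eq_bigl => j; rewrite ltn_ord.
Qed.

Lemma voltage_factor_is_Ck_factor k :
  is_Ck_factor (blowup (@cycle_adj m) V) m (voltage_factor k).
Proof.
split=> [[u a] [w b] | [u a]].
  by case/orP=> /andP[/= /eqP-> _]; rewrite /blowup cycle_adjE eqxx ?orbT.
pose lift i := (i, a - partial_voltage k u + partial_voltage k i).
have lift_inj : injective lift by move=> i j [].
have liftS i : (lift (ordS i)).2 = (lift i).2 + d i k.
  by rewrite /= partial_voltage_ordS addrA.
exists (map lift (enum 'I_m)); split.
- by rewrite map_inj_uniq ?enum_uniq.
- by rewrite size_map size_enum_ord.
- by rewrite (_ : (u, a) = lift u) ?map_f ?mem_enum // /lift subrK.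
move=> _ /mapP[i _ ->] [w b].
rewrite /cyc_edge (next_map lift_inj) ?enum_uniq // (prev_map lift_inj) ?enum_uniq //.
rewrite next_enum_ord prev_enum_ord /voltage_factor !xpair_eqE -liftS /=.
congr orb; have [-> | ne_w] := eqVneq w (ord_pred i).
  rewrite ord_predK eqxx -{1}(ord_predK i) partial_voltage_ordS addrA.
  by rewrite (inj_eq (addIr _)) eq_sym.
suff -> : (i == ordS w) = false by [].
by apply/negbTE; apply: contraNneq ne_w => ->; rewrite ordSK.
Qed.

Lemma voltage_factor_partition x y : (2 < m)%N -> blowup (@cycle_adj m) V x y ->
  count (fun F => F x y) [seq voltage_factor k | k <- enum V] = 1%N.
Proof.
move: x y => [u a] [w b] m_gt2; rewrite /blowup cycle_adjE count_map /=.
have shift (s t z : V) : (t == s + z) = (z == t - s).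
  by rewrite [RHS]eq_sym subr_eq addrC.
case/orP=> /eqP->; rewrite /preim /voltage_factor /= eqxx.
  rewrite -(count_eq_bij (b - a) (d_bij u)); apply: eq_count => k /=.
  by rewrite (negbTE (ordS_ordS_neq _ m_gt2)) orbF shift.
rewrite -(count_eq_bij (a - b) (d_bij w)); apply: eq_count => k /=.
by rewrite (negbTE (ordS_ordS_neq _ m_gt2)) /= shift.
Qed.

Theorem voltage_factorization : (2 < m)%N ->
  has_Ck_factorization (blowup (@cycle_adj m) V) m.
Proof.
move=> m_gt2; exists [seq voltage_factor k | k <- enum V]; split.
  move=> i; rewrite size_map => lt_i; rewrite (nth_map 0) //.
  exact: voltage_factor_is_Ck_factor.
by move=> x y; apply: voltage_factor_partition.
Qed.

End VoltageFactorization.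

Definition klein : predArgType := ('F_2 * 'F_2)%type.
HB.instance Definition _ := GRing.Zmodule.on klein.
HB.instance Definition _ := Finite.on klein.

Section KleinDifferences.

Local Open Scope ring_scope.

(* Multiplication by a root [w] of [X^2 + X + 1] in GF(4) = 'F_2[w],
   in the basis (1, w). *)
Definition klein_rot (k : klein) : klein := (k.2, k.1 + k.2).

Lemma klein_addxx (k : klein) : k + k = 0.
Proof. by case: k => [[[|[|//]] ?] [[|[|//]] ?]]; apply/eqP. Qed.

Lemma klein_rot3 (k : klein) : klein_rot (klein_rot (klein_rot k)) = k.
Proof. by case: k => [[[|[|//]] ?] [[|[|//]] ?]]; apply/eqP. Qed.

Lemma klein_rot_sum (k : klein) : k + klein_rot k + klein_rot (klein_rot k) = 0.
Proof. by case: k => [[[|[|//]] ?] [[|[|//]] ?]]; apply/eqP. Qed.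

Lemma klein_mulrn (k : klein) n : k *+ n = k *+ odd n.
Proof.
elim: n => // n IHn; rewrite mulrS IHn [odd n.+1]/=.
by case: (odd n); rewrite /= ?addr0 ?klein_addxx.
Qed.

Lemma card_klein : #|klein| = 4%N.
Proof. by rewrite card_prod card_Fp. Qed.

Definition klein_diff m (u : 'I_m) : klein -> klein :=
  if odd m && (val u == (m - 2)%N) then klein_rot
  else if odd m && (val u == (m - 1)%N) then klein_rot \o klein_rot
  else id.

Lemma klein_diff_bij m (u : 'I_m) : bijective (klein_diff u).
Proof.
have rot_bij : bijective klein_rot.
  by exists (klein_rot \o klein_rot) => k; apply: klein_rot3.
rewrite /klein_diff; case: ifP => _; first exact: rot_bij.
by case: ifP => _; [apply: bij_comp | exists id].
Qed.

Lemma klein_diff_sum0 m k : (1 < m)%N -> \sum_(u < m) klein_diff u k = 0.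
Proof.
case: m => [|[|n]] // _; rewrite !big_ord_recr /=.
rewrite (eq_bigr (fun _ => k)) => [|i _]; last first.
  rewrite /klein_diff /= !subSS !subn0 (ltn_eqF (ltn_ord i)).
  by rewrite (ltn_eqF (leqW (ltn_ord i))) !andbF.
rewrite sumr_const card_ord klein_mulrn /klein_diff /= !subSS !subn0 eqxx.
rewrite (gtn_eqF (ltnSn n)) eqxx.
by case: (odd n); rewrite /= ?addrA ?klein_rot_sum ?add0r ?klein_addxx.
Qed.

End KleinDifferences.

Theorem mainTheorem3 (m : nat) (hm : 3 <= m) :
  has_Ck_factorization (@lexk _ (@cycle_adj m) 4) m.
Proof.
have ord4_klein : bijective (enum_val \o cast_ord (esym card_klein)).
  apply: bij_comp; first exact: enum_val_bij.
  by exists (cast_ord card_klein) => i; apply: val_inj.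
apply: has_Ck_factorization_blowup_bij ord4_klein _.
apply: (voltage_factorization (@klein_diff_bij m)) => [k | //].
exact/klein_diff_sum0/ltnW.
Qed.
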